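(* Let $D=(Q,\Sigma,\delta,q_0,A)$ be an f-minimal DFA, and let $p\in F(D)$ and $q\in Q$ with $L(p)\sim L(q)$. Then $p=q$.
   Context: All DFAs are complete and all states are reachable from the start state. $L\sim L'$ means $L\triangle L'$ is finite; for DFAs, $D\sim D'$ means $L(D)\sim L(D')$. For a state $r$, $L(r)$ is the language recognized by $(Q,\Sigma,\delta,r,A)$. The finite part $F(D)$ is the set of states $r$ such that $\{w\in\Sigma^*:\delta(q_0,w)=r\}$ is finite. A DFA $D$ with state set $Q$ is \emph{f-minimal} if every DFA $D'$ (with state set $Q'$) satisfying $D\sim D'$ has $|Q|\le|Q'|$. *)

From mathcomp Require Import all_boot.
Set Implicit Arguments. Unset Strict Implicit. Unset Printing Implicit Defensive.

Record dfa (Sigma : finType) := DFA {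
  state : finType;
  delta : state -> Sigma -> state;
  start : state;
  accept : {set state}
}.

Section DFA.
Variable Sigma : finType.
Implicit Types (D : dfa Sigma).

Definition delta_star D (r : state D) (w : seq Sigma) : state D :=
  foldl (@delta _ D) r w.

Definition lang := seq Sigma -> Prop.

Definition finite_lang (L : lang) : Prop :=
  exists s : seq (seq Sigma), forall w, L w -> w \in s.

Definition lang_sim (L L' : lang) : Prop :=
  finite_lang (fun w => (L w /\ ~ L' w) \/ (L' w /\ ~ L w)).

Definition lang_of D (r : state D) : lang := fun w => delta_star r w \in accept D.

Definition lang_dfa D : lang := lang_of (start D).

Definition reachable D : Prop := forall r : state D, exists w, delta_star (start D) w = r.

Definition dfa_sim D D' : Prop := lang_sim (lang_dfa D) (lang_dfa D').

Definition in_finite_part D (r : state D) : Prop :=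
  finite_lang (fun w => delta_star (start D) w = r).

Definition f_minimal D : Prop :=
  forall D' : dfa Sigma, reachable D' -> dfa_sim D D' -> #|state D| <= #|state D'|.

End DFA.

From mathcomp Require Import all_boot.
From Stdlib Require Import ClassicalEpsilon FunctionalExtensionality.
Set Implicit Arguments. Unset Strict Implicit. Unset Printing Implicit Defensive.

(* If no path leads from q to p, redirecting every transition into p towards q
   (and the start state too, if it is p) makes p unreachable; a word changes
   its fate only if a prefix of it reaches p, which happens for finitely many
   prefixes when p is in F(D), and then only if the rest lies in
   L(p) Δ L(q). So the trimmed redirected automaton is f-equivalent and
   smaller: in an f-minimal DFA, p in F(D) and L(p) ~ L(q) force a path from
   q to p. Then q inherits membership in F(D) from p, hence symmetrically
   there is a path from p to q; the resulting loop at p must be empty since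
   pumping it would reach p by arbitrarily long words. *)

Section Languages.
Variable Sigma : finType.
Implicit Types (E : dfa Sigma).

Lemma delta_star_cat E (r : state E) u v :
  delta_star r (u ++ v) = delta_star (delta_star r u) v.
Proof. exact: foldl_cat. Qed.

Lemma lang_sim_sym (L L' : lang Sigma) : lang_sim L L' -> lang_sim L' L.
Proof. by move=> [s Hs]; exists s => w Hw; apply: Hs; tauto. Qed.

Lemma in_finite_part_pred E (p q : state E) y :
  delta_star q y = p -> in_finite_part p -> in_finite_part q.
Proof.
move=> qy_p [W HW]; exists [seq take (size t - size y) t | t <- W] => x xq.
have xyW : x ++ y \in W by apply: HW; rewrite delta_star_cat xq.
have -> : x = take (size (x ++ y) - size y) (x ++ y).
  by rewrite size_cat addnK take_size_cat.
exact: map_f.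
Qed.

Lemma in_finite_part_loop_nil E (p : state E) x c :
  delta_star (start E) x = p -> in_finite_part p -> delta_star p c = p ->
  c = [::].
Proof.
move=> xp [W HW] cp; set pump := fun n => flatten (nseq n c).
have pump_p n : delta_star p (pump n) = p.
  by elim: n => //= n IH; rewrite delta_star_cat cp.
have size_pump n : size (pump n) = n * size c.
  by elim: n => //= n IH; rewrite size_cat IH mulSn.
set m := \max_(t <- W) size t.
have : size (x ++ pump m.+1) <= m.
  by apply: leq_bigmax_seq => //; apply: HW; rewrite delta_star_cat xp pump_p.
rewrite size_cat size_pump; case: c {cp pump_p size_pump pump} => //= a c.
by rewrite mulnS => /(leq_trans (leq_addl _ _)) /(leq_trans (leq_addr _ _));
  rewrite ltnn.
Qed.

End Languages.

Section ReachablePart.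
Variables (Sigma : finType) (E : dfa Sigma).

Definition reachableb (r : state E) : bool :=
  if excluded_middle_informative (exists w, delta_star (start E) w = r)
  then true else false.

Lemma reachablebP (r : state E) :
  reflect (exists w, delta_star (start E) w = r) (reachableb r).
Proof. by rewrite /reachableb; case: excluded_middle_informative; constructor. Qed.

Lemma reachableb_start : reachableb (start E).
Proof. by apply/reachablebP; exists [::]. Qed.

Lemma reachableb_delta (r : state E) a : reachableb r -> reachableb (delta r a).
Proof.
move/reachablebP=> [w wr]; apply/reachablebP; exists (w ++ [:: a]).
by rewrite delta_star_cat wr.
Qed.

Definition reachable_part : dfa Sigma :=
  @DFA Sigma {r : state E | reachableb r}
    (fun r a => exist _ (delta (val r) a) (reachableb_delta a (valP r)))
    (exist _ (start E) reachableb_start)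
    [set r | val r \in accept E].

Lemma reachable_part_delta_star (r : state reachable_part) w :
  val (delta_star r w) = delta_star (val r) w.
Proof. by elim: w r => [|a w IH] r //; exact: IH. Qed.

Lemma reachable_reachable_part : reachable reachable_part.
Proof.
move=> r; have /reachablebP[w wr] := valP r; exists w.
by apply: val_inj; rewrite reachable_part_delta_star.
Qed.

Lemma lang_reachable_part : lang_dfa reachable_part = lang_dfa E.
Proof.
apply: functional_extensionality => w.
by rewrite /lang_dfa /lang_of inE reachable_part_delta_star.
Qed.

Lemma card_reachable_part_lt (x : state E) :
  (forall w, delta_star (start E) w != x) -> #|state reachable_part| < #|state E|.
Proof.
move=> x_unreach; rewrite /= card_sig -(cardC [pred r | reachableb r]).
rewrite -[X in X < _]addn0 ltn_add2l; apply/card_gt0P; exists x.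
by rewrite !inE; apply/reachablebP => -[w /eqP]; rewrite (negbTE (x_unreach w)).
Qed.

End ReachablePart.

Section Redirect.
Variables (Sigma : finType) (E : dfa Sigma) (p q : state E).
Hypothesis q_avoids_p : forall y, delta_star q y != p.

Definition redirect_state (r : state E) : state E := if r == p then q else r.

Definition redirect : dfa Sigma :=
  @DFA Sigma (state E) (fun r a => redirect_state (delta r a))
    (redirect_state (start E)) (accept E).

Lemma redirect_state_neq r : redirect_state r != p.
Proof.
by rewrite /redirect_state; case: ifPn => // _; exact: (q_avoids_p [::]).
Qed.

Lemma redirect_delta_star_neq r w : r != p -> @delta_star _ redirect r w != p.
Proof. by elim: w r => [|a w IH] r // _; apply: IH; exact: redirect_state_neq. Qed.

Lemma redirect_delta_star_avoid r w :
  (forall y, delta_star r y != p) -> @delta_star _ redirect r w = delta_star r w.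
Proof.
elim: w r => [|a w IH] r // r_avoids /=.
rewrite /redirect_state (negbTE (r_avoids [:: a])).
by apply: IH => y; exact: r_avoids (a :: y).
Qed.

(* The first visit of the original run to p splits w as u ++ v; from then on
   the redirected run follows the original one from q. *)
Lemma redirect_delta_star r w :
  @delta_star _ redirect (redirect_state r) w = delta_star r w \/
  exists u v, [/\ w = u ++ v, delta_star r u = p &
    @delta_star _ redirect (redirect_state r) w = delta_star q v].
Proof.
elim: w r => [|a w IH] r; rewrite /redirect_state; case: eqP => [->|_].
- by right; exists [::], [::].
- by left.
- by right; exists [::], (a :: w); rewrite redirect_delta_star_avoid.
- have [run_eq|[u [v [-> ru_p run_eq]]]] := IH (delta r a); first by left.
  by right; exists (a :: u), v.
Qed.

Lemma redirect_unreachable w : delta_star (start redirect) w != p.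
Proof. exact/redirect_delta_star_neq/redirect_state_neq. Qed.

Lemma dfa_sim_redirect :
  in_finite_part p -> lang_sim (lang_of p) (lang_of q) -> dfa_sim E redirect.
Proof.
move=> [W HW] [V HV]; exists [seq u ++ v | u <- W, v <- V] => w.
rewrite /lang_dfa /lang_of.
have [->|[u [v [-> up ->]]]] := redirect_delta_star (start E) w; first tauto.
rewrite delta_star_cat up => uv_diff.
by apply: allpairs_f; [exact: HW | exact: HV].
Qed.

End Redirect.

Lemma f_minimal_sim_reaches (Sigma : finType) (E : dfa Sigma) (p q : state E) :
  f_minimal E -> in_finite_part p -> lang_sim (lang_of p) (lang_of q) ->
  exists y, delta_star q y = p.
Proof.
move=> E_min p_fin pq_sim; apply: NNPP => no_path.
have q_avoids_p y : delta_star q y != p.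
  by apply/negP => /eqP qy_p; apply: no_path; exists y.
set E' := reachable_part (redirect p q).
have : dfa_sim E E'.
  by rewrite /dfa_sim lang_reachable_part; exact: dfa_sim_redirect.
move/(E_min E' (@reachable_reachable_part _ _)); apply/negP; rewrite -ltnNge.
exact/card_reachable_part_lt/redirect_unreachable.
Qed.

Theorem mainTheorem9 (Sigma : finType) (D : dfa Sigma) :
  reachable D -> f_minimal D ->
  forall p q : state D,
    in_finite_part p -> lang_sim (lang_of p) (lang_of q) -> p = q.
Proof.
move=> D_reach D_min p q p_fin pq_sim.
have [y qy_p] := f_minimal_sim_reaches D_min p_fin pq_sim.
have q_fin := in_finite_part_pred qy_p p_fin.
have [z pz_q] := f_minimal_sim_reaches D_min q_fin (lang_sim_sym pq_sim).
have [x xp] := D_reach p.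
have : z ++ y = [::].
  by apply: in_finite_part_loop_nil xp p_fin _; rewrite delta_star_cat pz_q.
by case: z pz_q => // <-.
Qed.
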